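(* Let $J$ be a finite set and let $V=\bigoplus_{i,j\in J}V_{ij}$ be a connected bi-$J$-graded finite dimensional vector space, and let $\Gamma$ be the directed graph with vertex set $J$ whose edges from $i$ to $j$ form a chosen basis of $V_{ij}$. Then the monoidal algebra $\mathcal{P}(\mathrm{Vec}(J\times J),V)_{\bullet\to\bullet}$, given by $\mathcal{P}_{m\to n}=\mathrm{Hom}_{\mathrm{Vec}(J\times J)}(V^{\otimes m}\to V^{\otimes n})$ with tangles acting by the graphical calculus, is isomorphic to the graph monoidal algebra $\mathcal{GMA}(\Gamma)_{\bullet\to\bullet}$.
   Context: $\mathrm{Vec}(J\times J)$ is the tensor category of finite dimensional bi-$J$-graded vector spaces $V=\bigoplus_{i,j}V_{ij}$ with grading-preserving linear maps and tensor product $(V\otimes W)_{ik}=\bigoplus_{j}V_{ij}\otimes W_{jk}$. $V$ is connected if for all $i,k\in J$ there is a sequence $i=j_0,\dots,j_n=k$ with $V_{j_{\ell-1}j_\ell}\ne0$. A monoidal tangle (single label) is a rectangle with finitely many rectangles removed and non-crossing strings, oriented upward with no local maxima or minima, beginning and ending on tops/bottoms of rectangles, up to such isotopy; monoidal tangles form a colored operad by insertion. A monoidal algebra is a family of vector spaces $\mathcal{P}_{m\to n}$ ($m,n\ge0$) with a multilinear action of monoidal tangles (a tangle with $k$ inputs having $m_i$ strings at the bottom and $n_i$ at the top of the $i$th input gives a map $\prod_i\mathcal{P}_{m_i\to n_i}\to\mathcal{P}_{m_0\to n_0}$) compatible with composition. An isomorphism of monoidal algebras is a family of linear isomorphisms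 intertwining all tangle actions. The graph monoidal algebra $\mathcal{GMA}(\Gamma)_{m\to n}$ has basis the pairs $(p,q)$ of paths in $\Gamma$ of lengths $m,n$ with the same source and same target; a tangle $T$ acts by $T((p_1,q_1),\dots,(p_k,q_k))=\sum_\sigma\prod_i\delta_{\sigma|_i=(p_i,q_i)}\,\sigma|_0$, the sum over states $\sigma$ (assignments of vertices to regions and edges to strings such that a string labelled $\varepsilon$ has $s(\varepsilon)$ on its left region and $t(\varepsilon)$ on its right), where $\sigma|_i$ is the pair of paths read left to right along the bottom and top of the $i$th rectangle. *)

From HB Require Import structures.
From mathcomp Require Import all_boot all_algebra.
Set Implicit Arguments. Unset Strict Implicit. Unset Printing Implicit Defensive.
Import GRing.Theory.
Local Open Scope ring_scope.

(* Monoidal tangles (single label), in height-ordered ("generic") form.    *)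
(* A tangle with s strings at the bottom and k at the top is a stack of   *)
(* input rectangles, read bottom to top; MT_box p m n r t puts an input   *)
(* rectangle with m strings below and n above, having p through-strings   *)
(* on its left and r on its right, and then continues with t above it.    *)
(* Inputs are numbered by height.                                         *)
Inductive mtangle : nat -> nat -> Type :=
| MT_id (s : nat) : mtangle s s
| MT_box (p m n r k : nat) (t : mtangle (p + n + r) k) : mtangle (p + m + r) k.

Fixpoint tinputs (P : nat -> nat -> Type) s k (t : mtangle s k) : Type :=
  match t with
  | MT_id _ => unit
  | @MT_box p m n r k t' => (P m n * tinputs P t')%type
  end.

Fixpoint tmap (P Q : nat -> nat -> Type) (f : forall m n, P m n -> Q m n)
  s k (t : mtangle s k) : tinputs P t -> tinputs Q t :=
  match t return tinputs P t -> tinputs Q t with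
  | MT_id _ => fun _ => tt
  | @MT_box p m n r k t' => fun xs => (f m n xs.1, @tmap P Q f _ _ t' xs.2)
  end.

Fixpoint tall (P : nat -> nat -> Type) (Pr : forall m n, P m n -> Prop)
  s k (t : mtangle s k) : tinputs P t -> Prop :=
  match t return tinputs P t -> Prop with
  | MT_id _ => fun _ => True
  | @MT_box p m n r k t' => fun xs => Pr m n xs.1 /\ @tall P Pr _ _ t' xs.2
  end.

Section Graph.
Variables (J E : finType) (src tgt : E -> J).

Fixpoint is_walk (v : J) (es : seq E) : bool :=
  if es is e :: es' then (src e == v) && is_walk (tgt e) es' else true.

Definition gpath (n : nat) : finType :=
  {x : J * n.-tuple E | is_walk x.1 x.2}.

Definition pstart n (x : gpath n) : J := (val x).1.
Definition pedges n (x : gpath n) : seq E := tval (val x).2.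
Definition ptarget n (x : gpath n) : J := last (pstart x) (map tgt (pedges x)).
Definition pdata n (x : gpath n) : J * seq E := (pstart x, pedges x).

Definition gconnected : Prop :=
  forall i k : J, exists vs : seq J,
    path (fun a b => [exists e, (src e == a) && (tgt e == b)]) i vs /\ last i vs = k.

Definition splits a c (r : gpath (a + c)) (a1 : gpath a) (c1 : gpath c) : bool :=
  [&& pedges r == pedges a1 ++ pedges c1, pstart r == pstart a1
    & pstart c1 == ptarget a1].

Definition gbasis (m n : nat) : finType :=
  {pq : gpath m * gpath n | (pstart pq.1 == pstart pq.2) && (ptarget pq.1 == ptarget pq.2)}.

Variable F : fieldType.

Definition GMA (m n : nat) := {ffun gbasis m n -> F^o}.

(* coefficient of the basis element (p, q) in x (0 if (p,q) is not a basis pair) *)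
Definition gcoef m n (x : GMA m n) (p : gpath m) (q : gpath n) : F :=
  if insub (p, q) is Some b then x b else 0.

(* States of a tangle: a labelling of regions by vertices and strings by   *)
(* edges; in height-ordered form it is given by, for each input rectangle, *)
(* the labels (L, A, B, R) of the strings to its left (L), below (A),      *)
(* above (B), to its right (R) together with the adjacent regions, and the *)
(* top labelling; validity glues consecutive horizontal slices.            *)
Fixpoint tstate s k (t : mtangle s k) : finType :=
  match t with
  | MT_id s => gpath s
  | @MT_box p m n r k t' =>
      ((gpath p * gpath m * gpath n * gpath r) * tstate t')%type
  end.

Definition st_bot s k (t : mtangle s k) : tstate t -> J * seq E :=
  match t return tstate t -> J * seq E with
  | MT_id _ => fun x => pdata x
  | @MT_box p m n r k t' => fun x =>
      let: (L, A, B, R) := x.1 in (pstart L, pedges L ++ pedges A ++ pedges R)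
  end.

Fixpoint st_top s k (t : mtangle s k) : tstate t -> J * seq E :=
  match t return tstate t -> J * seq E with
  | MT_id _ => fun x => pdata x
  | @MT_box p m n r k t' => fun x => @st_top _ _ t' x.2
  end.

Fixpoint st_valid s k (t : mtangle s k) : tstate t -> bool :=
  match t return tstate t -> bool with
  | MT_id _ => fun _ => true
  | @MT_box p m n r k t' => fun x =>
      let: (L, A, B, R) := x.1 in
      [&& ptarget L == pstart A, pstart A == pstart B,
          ptarget A == ptarget B, pstart R == ptarget A,
          @st_bot _ _ t' x.2 == (pstart L, pedges L ++ pedges B ++ pedges R)
        & @st_valid _ _ t' x.2]
  end.

(* prod_i delta_{sigma|_i = (p_i,q_i)} extended multilinearly:            *)
(* prod_i x_i(sigma|_i)                                                    *)
Fixpoint st_weight s k (t : mtangle s k) : tstate t -> tinputs GMA t -> F :=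
  match t return tstate t -> tinputs GMA t -> F with
  | MT_id _ => fun _ _ => 1
  | @MT_box p m n r k t' => fun x xs =>
      let: (L, A, B, R) := x.1 in gcoef xs.1 A B * @st_weight _ _ t' x.2 xs.2
  end.

Definition gma_act s k (t : mtangle s k) (xs : tinputs GMA t) : GMA s k :=
  [ffun b : gbasis s k =>
     \sum_(sg : tstate t | [&& st_valid sg, st_bot sg == pdata (val b).1
                                & st_top sg == pdata (val b).2])
        st_weight sg xs].

(* The monoidal algebra P(Vec(J x J), V)  where V_ij is the vector space   *)
(* with basis the edges i -> j.  V^{(x) m} is identified with functions on *)
(* paths of length m (the component (i,k) being the functions supported on *)
(* paths from i to k); morphisms are grading-preserving linear maps.       *)
Definition Vt (m : nat) := {ffun gpath m -> F^o}.

Definition supported_in m (i k : J) (v : Vt m) : Prop :=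
  forall r : gpath m, v r != 0 -> pstart r = i /\ ptarget r = k.

Definition graded m n (f : 'Hom(Vt m, Vt n)) : Prop :=
  forall (i k : J) (v : Vt m), supported_in i k v -> supported_in i k (f v).

Definition pdelta m (r : gpath m) : Vt m := [ffun r' => (r' == r)%:R].

(* tensor product of morphisms, V^{(x)a} (x) V^{(x)c} = V^{(x)(a+c)} *)
Definition htensor a b c d (f : 'Hom(Vt a, Vt b)) (g : 'Hom(Vt c, Vt d))
  : 'Hom(Vt (a + c), Vt (b + d)) :=
  linfun (fun v : Vt (a + c) => [ffun q : gpath (b + d) =>
    \sum_(r0 : gpath (a + c)) v r0 *
      \sum_(a1 : gpath a) \sum_(c1 : gpath c) \sum_(b1 : gpath b) \sum_(d1 : gpath d)
        (splits r0 a1 c1 && splits q b1 d1)%:R *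
          (f (pdelta a1) b1 * g (pdelta c1) d1)] : Vt (b + d)).

Definition hid m : 'Hom(Vt m, Vt m) := \1%VF.

Fixpoint vec_act s k (t : mtangle s k) :
    tinputs (fun m n => 'Hom(Vt m, Vt n)) t -> 'Hom(Vt s, Vt k) :=
  match t in mtangle s k return tinputs (fun m n => 'Hom(Vt m, Vt n)) t -> 'Hom(Vt s, Vt k) with
  | MT_id s => fun _ => hid s
  | @MT_box p m n r k t' => fun xs =>
      (@vec_act _ _ t' xs.2 \o htensor (htensor (hid p) xs.1) (hid r))%VF
  end.

End Graph.

(* A linear map f : V^(x)m -> V^(x)n is recorded by its matrix coefficients f(delta_p)(q) in
   the path bases.  Gradedness says exactly that these vanish unless p and q are parallel
   (same source, same target), so they form an element of GMA(Gamma)_(m -> n), and every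
   element arises this way.  For a tangle, the coefficient of its action at (P, Q) is computed
   by induction over the boxes from the bottom: the coefficient of id_p (x) x (x) id_r at
   (P, P') vanishes unless P and P' agree to the left and right of the box, and then it is the
   coefficient of x between their middle segments.  Summing over the intermediate paths P'
   therefore reproduces the sum over states of the tangle. *)

From HB Require Import structures.
From mathcomp Require Import all_boot all_algebra.
Set Implicit Arguments. Unset Strict Implicit. Unset Printing Implicit Defensive.
Import GRing.Theory.
Local Open Scope ring_scope.

Section Paths.
Variables (J E : finType) (src tgt : E -> J).
Local Notation gp := (gpath src tgt).
Local Notation walk := (is_walk src tgt).

Lemma pdata_inj n : injective (@pdata _ _ src tgt n).
Proof.
move=> [[v1 t1] w1] [[v2 t2] w2]; rewrite /pdata /pstart /pedges /= => -[e1 e2].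
by apply: val_inj; congr pair => //; apply: val_inj.
Qed.

Lemma gpath_eq n (x y : gp n) : pstart x = pstart y -> pedges x = pedges y -> x = y.
Proof. by move=> e1 e2; apply: pdata_inj; rewrite /pdata e1 e2. Qed.

Lemma walk_cat v s1 s2 :
  walk v (s1 ++ s2) = walk v s1 && walk (last v (map tgt s1)) s2.
Proof. by elim: s1 v => [|e s IH] v //=; rewrite IH andbA. Qed.

Lemma gpath_walk n (x : gp n) : walk (pstart x) (pedges x).
Proof. exact: (valP x). Qed.

Lemma size_pedges n (x : gp n) : size (pedges x) = n.
Proof. exact: size_tuple. Qed.

Definition mkgpath n v (es : seq E) (es_n : size es == n) (es_walk : walk v es) : gp n :=
  exist _ (v, Tuple es_n) es_walk.

Lemma ptarget_cat n (x : gp n) s :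
  last (pstart x) (map tgt (pedges x ++ s)) = last (ptarget x) (map tgt s).
Proof. by rewrite map_cat last_cat. Qed.

Section Split.
Variables (a c : nat) (r : gp (a + c)).

Let size_take_split : size (take a (pedges r)) == a.
Proof. by rewrite size_takel // size_pedges leq_addr. Qed.

Let size_drop_split : size (drop a (pedges r)) == c.
Proof. by rewrite size_drop size_pedges addKn. Qed.

Let walk_split :
  walk (pstart r) (take a (pedges r)) &&
  walk (last (pstart r) (map tgt (take a (pedges r)))) (drop a (pedges r)).
Proof. by rewrite -walk_cat cat_take_drop gpath_walk. Qed.

Definition lsplit : gp a := mkgpath size_take_split (proj1 (andP walk_split)).
Definition rsplit : gp c := mkgpath size_drop_split (proj2 (andP walk_split)).

Lemma lsplit_start : pstart lsplit = pstart r. Proof. by []. Qed.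
Lemma rsplit_start : pstart rsplit = ptarget lsplit. Proof. by []. Qed.
Lemma lsplit_edges : pedges lsplit = take a (pedges r). Proof. by []. Qed.
Lemma rsplit_edges : pedges rsplit = drop a (pedges r). Proof. by []. Qed.

Lemma split_cat : pedges lsplit ++ pedges rsplit = pedges r.
Proof. exact: cat_take_drop. Qed.

Lemma rsplit_target : ptarget rsplit = ptarget r.
Proof. by rewrite /ptarget rsplit_start -ptarget_cat split_cat. Qed.

Lemma splits_eq a1 c1 : splits r a1 c1 = (a1 == lsplit) && (c1 == rsplit).
Proof.
apply/idP/idP => [/and3P[/eqP er /eqP sr /eqP sc]|/andP[/eqP-> /eqP->]]; last first.
  by rewrite /splits split_cat rsplit_start !eqxx.
have ea1 : a1 = lsplit.
  apply: gpath_eq; first by rewrite lsplit_start sr.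
  by rewrite lsplit_edges er take_size_cat ?size_pedges.
rewrite ea1 eqxx; apply/eqP; apply: gpath_eq; first by rewrite sc ea1.
by rewrite rsplit_edges er drop_size_cat ?size_pedges.
Qed.

End Split.

Definition pdata3 p m r (L : gp p) (A : gp m) (R : gp r) : J * seq E :=
  (pstart L, pedges L ++ pedges A ++ pedges R).

Section Split3.
Variables (p m r : nat).

Definition concat3 (P : gp (p + m + r)) (L : gp p) (A : gp m) (R : gp r) : bool :=
  [&& ptarget L == pstart A, pstart R == ptarget A & pdata3 L A R == pdata P].

Definition pleft (P : gp (p + m + r)) : gp p := lsplit (lsplit P).
Definition pmid (P : gp (p + m + r)) : gp m := rsplit (lsplit P).
Definition pright (P : gp (p + m + r)) : gp r := rsplit P.

Lemma pmid_start P : pstart (pmid P) = ptarget (pleft P).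
Proof. exact: rsplit_start. Qed.

Lemma pright_start P : pstart (pright P) = ptarget (pmid P).
Proof. by rewrite /pright rsplit_start -(rsplit_target (lsplit P)). Qed.

Lemma concat3_pdata P L A R : concat3 P L A R -> pdata P = pdata3 L A R.
Proof. by case/and3P=> _ _ /eqP. Qed.

Lemma concat3_eq P L A R :
  concat3 P L A R = [&& L == pleft P, A == pmid P & R == pright P].
Proof.
apply/idP/idP => [/and3P[/eqP tL /eqP sR /eqP[sL eP]]|]; last first.
  case/and3P=> /eqP-> /eqP-> /eqP->; apply/and3P; split.
  - by rewrite pmid_start.
  - by rewrite pright_start.
  - by rewrite /pdata3 /pdata catA !split_cat.
have szLA : size (pedges L ++ pedges A) = p + m by rewrite size_cat !size_pedges.
have eL : L = pleft P.
  apply: gpath_eq; first exact: sL.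
  by rewrite !lsplit_edges -eP catA take_size_cat // take_size_cat ?size_pedges.
have eA : A = pmid P.
  apply: gpath_eq; first by rewrite pmid_start -tL eL.
  by rewrite rsplit_edges lsplit_edges -eP catA take_size_cat // drop_size_cat ?size_pedges.
have eR : R = pright P.
  apply: gpath_eq; first by rewrite pright_start sR eA.
  by rewrite rsplit_edges -eP catA drop_size_cat.
by rewrite eL eA eR !eqxx.
Qed.

Lemma concat3_ex L A R : ptarget L = pstart A -> pstart R = ptarget A ->
  exists P : gp (p + m + r), concat3 P L A R.
Proof.
move=> tL sR.
have es_n : size (pedges L ++ pedges A ++ pedges R) == p + m + r.
  by rewrite !size_cat !size_pedges addnA.
have es_walk : walk (pstart L) (pedges L ++ pedges A ++ pedges R).
  by rewrite walk_cat gpath_walk -/(ptarget L) tL walk_cat gpath_walk -/(ptarget A) -sR gpath_walk.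
exists (mkgpath es_n es_walk).
by apply/and3P; split; apply/eqP.
Qed.

End Split3.
End Paths.

Section Kernels.
Variables (F : fieldType) (J E : finType) (src tgt : E -> J).
Local Notation gp := (gpath src tgt).
Local Notation Vt := (Vt src tgt F).
Local Notation delta := (pdelta F).

Lemma pdeltaE m (r r' : gp m) : delta r r' = (r' == r)%:R.
Proof. by rewrite ffunE. Qed.

Lemma sum_indicator (T : finType) (P : pred T) (G : T -> F) :
  \sum_x (P x)%:R * G x = \sum_(x | P x) G x.
Proof. by rewrite [RHS]big_mkcond; apply: eq_bigr => x _; rewrite mulr_natl mulrb. Qed.

Lemma vt_expand m (v : Vt m) : v = \sum_(r : gp m) v r *: delta r.
Proof.
apply/ffunP => x; rewrite sum_ffunE (bigD1 x) //= big1 => [|y /negbTE ney].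
  by rewrite !ffunE eqxx addr0 -[RHS]/(v x * 1) mulr1.
by rewrite !ffunE eq_sym ney -[LHS]/(v y * 0) mulr0.
Qed.

Lemma lfun_coefE m n (f : 'Hom(Vt m, Vt n)) v q :
  f v q = \sum_(r : gp m) v r * f (delta r) q.
Proof.
rewrite {1}(vt_expand v) linear_sum sum_ffunE.
by apply: eq_bigr => r _; rewrite linearZ ffunE.
Qed.

Section Kernel.
Variables (m n : nat) (K : gp m -> gp n -> F).

Definition kernel_fun (v : Vt m) : Vt n := [ffun q => \sum_r v r * K r q].

Fact kernel_fun_is_linear : linear kernel_fun.
Proof.
move=> k u v; apply/ffunP => q; rewrite !ffunE.
rewrite -[k *: \sum_r _]/(k * _) mulr_sumr -big_split; apply: eq_bigr => r _.
by rewrite !ffunE -[k *: u r]/(k * u r) mulrDl mulrA.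
Qed.

HB.instance Definition _ :=
  GRing.isLinear.Build F (Vt m) (Vt n) _ kernel_fun kernel_fun_is_linear.

Lemma kernel_homE v q : linfun kernel_fun v q = \sum_r v r * K r q.
Proof. by rewrite lfunE ffunE. Qed.

Lemma kernel_hom_delta r q : linfun kernel_fun (delta r) q = K r q.
Proof.
rewrite kernel_homE (bigD1 r) //= pdeltaE eqxx mul1r big1 ?addr0 // => r' ne.
by rewrite pdeltaE (negbTE ne) mul0r.
Qed.

End Kernel.

Lemma hid_delta m (r q : gp m) : hid src tgt F m (delta r) q = (q == r)%:R.
Proof. by rewrite id_lfunE pdeltaE. Qed.

Lemma htensor_delta a b c d (f : 'Hom(Vt a, Vt b)) (g : 'Hom(Vt c, Vt d)) r q :
  htensor f g (delta r) q =
  f (delta (lsplit r)) (lsplit q) * g (delta (rsplit r)) (rsplit q).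
Proof.
(* [htensor f g] is [linfun (kernel_fun _)] by definition. *)
rewrite [LHS](@kernel_hom_delta (a + c) (b + d)) pair_bigA.
under eq_bigr do rewrite pair_bigA.
rewrite pair_bigA /=.
under eq_bigr => w _ do
  rewrite !splits_eq -[_ && _]/(w == ((lsplit r, rsplit r), (lsplit q, rsplit q))).
by rewrite sum_indicator big_pred1_eq.
Qed.

End Kernels.

Section Correspondence.
Variables (F : fieldType) (J E : finType) (src tgt : E -> J).
Local Notation gp := (gpath src tgt).
Local Notation Vt := (Vt src tgt F).
Local Notation GMA := (GMA src tgt F).
Local Notation delta := (pdelta F).

Definition parallel m n (a : gp m) (b : gp n) : bool :=
  (pstart a == pstart b) && (ptarget a == ptarget b).

Definition gma_of_hom m n (f : 'Hom(Vt m, Vt n)) : GMA m n :=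
  [ffun b => f (delta (val b).1) (val b).2].

Definition hom_of_gma m n (y : GMA m n) : 'Hom(Vt m, Vt n) :=
  linfun (kernel_fun (gcoef y)).

Fact gma_of_hom_is_linear m n : linear (@gma_of_hom m n).
Proof. by move=> a f g; apply/ffunP => b; rewrite !ffunE add_lfunE scale_lfunE !ffunE. Qed.

Lemma gcoef_eq0 m n (y : GMA m n) a b : ~~ parallel a b -> gcoef y a b = 0.
Proof. by move=> npar; rewrite /gcoef insubN. Qed.

Lemma gcoef_val m n (y : GMA m n) b : gcoef y (val b).1 (val b).2 = y b.
Proof. by rewrite /gcoef -surjective_pairing valK. Qed.

Lemma gcoef_gma_of_hom m n (f : 'Hom(Vt m, Vt n)) a b :
  gcoef (gma_of_hom f) a b = (parallel a b)%:R * f (delta a) b.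
Proof.
rewrite /gcoef; case: insubP => [b' par vb'|npar].
  by rewrite (_ : parallel a b) // mul1r ffunE vb'.
by rewrite (negbTE (npar : ~~ parallel a b)) mul0r.
Qed.

Lemma supported_delta m (a : gp m) : supported_in (pstart a) (ptarget a) (delta a).
Proof.
move=> r; rewrite pdeltaE; have [-> //|_] := eqVneq r a.
by rewrite eqxx.
Qed.

Lemma graded_coef m n (f : 'Hom(Vt m, Vt n)) a b :
  graded f -> f (delta a) b = gcoef (gma_of_hom f) a b.
Proof.
move=> gf; rewrite gcoef_gma_of_hom; have [_|npar] := boolP (parallel a b).
  by rewrite mul1r.
rewrite mul0r; apply/eqP; apply: contraNT npar => /(gf _ _ _ (@supported_delta m a) b).
by case=> sb tb; rewrite /parallel sb tb !eqxx.
Qed.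

Lemma gma_of_hom_inj m n (f g : 'Hom(Vt m, Vt n)) :
  graded f -> graded g -> gma_of_hom f = gma_of_hom g -> f = g.
Proof.
move=> gf gg efg; apply/lfunP => v; apply/ffunP => q.
rewrite !(lfun_coefE _ v); apply: eq_bigr => a _.
by rewrite (graded_coef _ _ gf) (graded_coef _ _ gg) efg.
Qed.

Lemma hom_of_gmaK m n (y : GMA m n) : gma_of_hom (hom_of_gma y) = y.
Proof. by apply/ffunP => b; rewrite ffunE kernel_hom_delta gcoef_val. Qed.

Lemma graded_hom_of_gma m n (y : GMA m n) : graded (hom_of_gma y).
Proof.
move=> i k v v_ik q; rewrite kernel_homE => nz.
have [a _ /[!mulf_eq0] /norP[va ya]] : exists2 a, true & v a * gcoef y a q != 0.
  apply/exists_inP; apply: contraNT nz => /exists_inPn ha.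
  by apply/eqP/big1 => a _; apply/eqP/negbNE/ha.
have /andP[/eqP <- /eqP <-] : parallel a q by apply: contraNT ya => /gcoef_eq0 ->.
exact: v_ik.
Qed.

End Correspondence.

Section GraphicalCalculus.
Variables (F : fieldType) (J E : finType) (src tgt : E -> J).
Local Notation gp := (gpath src tgt).
Local Notation Vt := (Vt src tgt F).
Local Notation GMA := (GMA src tgt F).
Local Notation delta := (pdelta F).

Section Box.
Variables (p m n r : nat) (x : 'Hom(Vt m, Vt n)).
Local Notation box := (htensor (htensor (hid src tgt F p) x) (hid src tgt F r)).

Lemma box_delta P P' : box (delta P) P' =
  \sum_(B : gp n) (concat3 P' (pleft P) B (pright P))%:R * gcoef (gma_of_hom x) (pmid P) B.
Proof.
rewrite !htensor_delta !hid_delta -/(pleft P) -/(pleft P') -/(pmid P) -/(pmid P').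
rewrite -/(pright P) -/(pright P') (bigD1 (pmid P')) //= big1 ?addr0 => [|B neB]; last first.
  by rewrite concat3_eq (negbTE neB) andbF mul0r.
rewrite concat3_eq eqxx gcoef_gma_of_hom.
have [eL|_] := eqVneq (pleft P') (pleft P); last by rewrite /= !mul0r.
have [eR|_] := eqVneq (pright P') (pright P); last by rewrite /= !mulr0 mul0r.
suff -> : parallel (pmid P) (pmid P') by rewrite /= !mul1r mulr1.
by rewrite /parallel !pmid_start -!pright_start eL eR !eqxx.
Qed.

Lemma sum_box_delta (S : J * seq E -> F) P :
  \sum_(P' : gp (p + n + r)) box (delta P) P' * S (pdata P') =
  \sum_(B : gp n) gcoef (gma_of_hom x) (pmid P) B * S (pdata3 (pleft P) B (pright P)).
Proof.
under eq_bigr do rewrite box_delta mulr_suml.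
rewrite exchange_big; apply: eq_bigr => B _.
have [par|npar] := boolP (parallel (pmid P) B); last first.
  by rewrite gcoef_eq0 // mul0r big1 // => P' _; rewrite mulr0 mul0r.
have [/eqP sB /eqP tB] := andP par.
have [P0 cP0] := concat3_ex (etrans (esym (pmid_start P)) sB) (etrans (pright_start P) tB).
rewrite (bigD1 P0) //= cP0 mul1r (concat3_pdata cP0) big1 ?addr0 // => P' neP'.
suff /negbTE-> : ~~ concat3 P' (pleft P) B (pright P) by rewrite !mul0r.
apply: contra neP' => cP'; apply/eqP/pdata_inj.
by rewrite (concat3_pdata cP') (concat3_pdata cP0).
Qed.

End Box.

Definition state_sum s k (t : mtangle s k) (ys : tinputs GMA t) (d e : J * seq E) : F :=
  \sum_(sg : tstate src tgt t | [&& st_valid sg, st_bot sg == d & st_top sg == e])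
    st_weight sg ys.

Lemma box_state_sum p m n r k (t : mtangle (p + n + r) k) (y : GMA m n)
    (ys : tinputs GMA t) (P : gp (p + m + r)) e :
  state_sum (t := MT_box m t) (y, ys) (pdata P) e =
  \sum_(B : gp n) gcoef y (pmid P) B * state_sum ys (pdata3 (pleft P) B (pright P)) e.
Proof.
(* The labels [L], [A], [R] below the box are forced by [P] (concat3_eq), so the states
   are indexed by the label [B] above the box and a state of [t]. *)
rewrite /state_sum (reindex_onto (fun u : gp n * tstate src tgt t =>
  ((pleft P, pmid P, u.1, pright P), u.2)) (fun sg => (sg.1.1.2, sg.2))) /=; last first.
  move=> [[[[L A] B] R] sg] /and3P[/and5P[tL _ _ sR _] botP _].
  have : concat3 P L A R by apply/and3P.
  by rewrite concat3_eq => /and3P[/eqP-> /eqP-> /eqP->].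
rewrite [RHS](bigID (parallel (pmid P))) /= [X in _ + X]big1 ?addr0 => [|B]; last first.
  by move/gcoef_eq0->; rewrite mul0r.
rewrite [RHS](eq_bigr _ (fun B _ => mulr_sumr _ _ _ _)).
rewrite pair_big_dep; apply: eq_bigl => -[B sg] /=.
have /and3P[c1 c2 c3] : concat3 P (pleft P) (pmid P) (pright P) by rewrite concat3_eq !eqxx.
rewrite c1 c2 c3 eqxx -/(pdata3 (pleft P) B (pright P)) /= andbT.
by rewrite /parallel; case: (st_valid sg); rewrite ?andbT ?andbF -?andbA.
Qed.

Lemma vec_act_delta s k (t : mtangle s k)
    (xs : tinputs (fun m n => 'Hom(Vt m, Vt n)) t) (P : gp s) (Q : gp k) :
  vec_act xs (delta P) Q =
  state_sum (tmap (@gma_of_hom F J E src tgt) xs) (pdata P) (pdata Q).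
Proof.
elim: t xs P Q => [s0|p m n r k0 t IH] xs P Q /=.
  rewrite hid_delta /state_sum /=; under eq_bigl do rewrite !(inj_eq (@pdata_inj _ _ _ _ _)).
  have [->|neQ] := eqVneq Q P; first by rewrite (big_pred1 P) // => sg; rewrite /= andbb.
  rewrite big_pred0 // => sg /=; have [-> /=|//] := eqVneq sg P.
  by rewrite eq_sym (negbTE neQ).
rewrite comp_lfunE lfun_coefE; under eq_bigr do rewrite IH.
by rewrite (sum_box_delta _ (fun d => state_sum _ d (pdata Q))) box_state_sum.
Qed.

End GraphicalCalculus.

Theorem theorem3p35 (F : fieldType) (J E : finType) (src tgt : E -> J)
    (conn : gconnected src tgt) :
  exists phi : forall m n, 'Hom(Vt src tgt F m, Vt src tgt F n) -> GMA src tgt F m n,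
    (* each phi m n is linear ... *)
    (forall m n (a : F) (f g : 'Hom(Vt src tgt F m, Vt src tgt F n)),
        phi m n (a *: f + g) = a *: phi m n f + phi m n g) /\
    (* ... and restricts to a bijection from the Hom-space of Vec(J x J) *)
    (forall m n (f g : 'Hom(Vt src tgt F m, Vt src tgt F n)),
        graded f -> graded g -> phi m n f = phi m n g -> f = g) /\
    (forall m n (y : GMA src tgt F m n),
        exists2 f, graded f & phi m n f = y) /\
    (* ... intertwining the actions of all monoidal tangles *)
    (forall s k (t : mtangle s k)
            (xs : tinputs (fun m n => 'Hom(Vt src tgt F m, Vt src tgt F n)) t),
        tall (fun m n (f : 'Hom(Vt src tgt F m, Vt src tgt F n)) => graded f) xs ->
        phi s k (vec_act xs) = gma_act (tmap phi xs)).
Proof.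
exists (@gma_of_hom F J E src tgt); split; [|split; [|split]].
- exact: gma_of_hom_is_linear.
- exact: gma_of_hom_inj.
- by move=> m n y; exists (hom_of_gma y); [exact: graded_hom_of_gma | exact: hom_of_gmaK].
- by move=> s k t xs _; apply/ffunP => b; rewrite !ffunE vec_act_delta.
Qed.
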